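(* Let $a\in\mathbb{R}$, $b\in(a,\infty)$, $h\in\mathbb{N}$, $v_1,\dots,v_h,w_1,\dots,w_h\in(0,\infty)$, let $f,p\in C(\mathbb{R},\mathbb{R})$ satisfy for all $x\in\mathbb{R}$ that $p(x)\ge0$ and $p^{-1}((0,\infty))=(a,b)$, with $\mathcal{L}$, $I_i^\theta$, $\operatorname{Lip}$ as in the context. Assume $\operatorname{Lip}(f)<\min_{i\in\{1,\dots,h\}}v_iw_i$, let $\theta\in\mathbb{R}^{h+1}$ satisfy $(\nabla\mathcal{L})(\theta)=0$, let $\varepsilon,\delta\in(0,\infty)$ satisfy $\varepsilon-\delta>2[\min_{j\in\{1,\dots,h\}}w_j]^{-1}$ and $\inf_{x\in[a+\delta,b-\delta]}p(x)\ge[\min_{j\in\{1,\dots,h\}}w_j]^{-1}\operatorname{Lip}(p)$, assume that $p|_{[a,a+\varepsilon]}$ is strictly increasing and $p|_{[b-\varepsilon,b]}$ is strictly decreasing, and assume that $\theta$ is not a descending critical point of $\mathcal{L}$. Then for all $x\in(a,b)$ it holds that $$\sum_{j\in\{1,\dots,h\},\,x\in I_j^\theta}v_jw_j\le4\max_{j\in\{1,\dots,h\},\,x\in I_j^\theta}v_jw_j.$$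
   Context: Let $\mathfrak{c}(x)=\min\{\max\{x,0\},1\}$. For $F\in C(\mathbb{R},\mathbb{R})$ let $\operatorname{Lip}(F)=\sup_{x,y\in[a,b],x\ne y}\frac{|F(x)-F(y)|}{|x-y|}$. For $\theta=(\theta_1,\dots,\theta_{h+1})\in\mathbb{R}^{h+1}$ and $i\in\{1,\dots,h\}$ let $\psi_i(\theta)=-[w_i]^{-1}\theta_i$, $I_i^\theta=(\psi_i(\theta),\psi_i(\theta)+[w_i]^{-1})\cap(a,b)$, $\mathcal{N}^\theta(x)=\theta_{h+1}+\sum_{i=1}^hv_i\mathfrak{c}(w_ix+\theta_i)$, and $\mathcal{L}(\theta)=\int_a^b(\mathcal{N}^\theta(x)-f(x))^2p(x)\,\mathrm{d}x$; in this setting $\mathcal{L}\in C^2(\mathbb{R}^{h+1},\mathbb{R})$. For $n\in\mathbb{N}$ and $F\in C^2(\mathbb{R}^n,\mathbb{R})$, a point $x\in\mathbb{R}^n$ is a descending critical point of $F$ if $(\nabla F)(x)=0$ and there exists $u\in\mathbb{R}^n$ with $\langle u,((\operatorname{Hess}F)(x))u\rangle<0$. *)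

From Stdlib Require Import Reals ClassicalEpsilon.
From Coquelicot Require Import Coquelicot.
Open Scope R_scope.

(* Vectors in R^n are represented as functions nat -> R, coordinates 1..n. *)

Definition clip (x : R) : R := Rmin (Rmax x 0) 1.

Fixpoint sumR (n : nat) (F : nat -> R) : R :=
  match n with O => 0 | S k => sumR k F + F (S k) end.

(* minimum over indices 1..n (meaningful for n >= 1) *)
Fixpoint minR (n : nat) (F : nat -> R) : R :=
  match n with O => F 1%nat | S k => Rmin (minR k F) (F (S k)) end.

(* maximum over those indices j in 1..n with P j; 0 if there is none
   (only used for positive values F j) *)
Fixpoint maxR_sel (n : nat) (P : nat -> Prop) (F : nat -> R) : R :=
  match n with
  | O => 0
  | S k => if excluded_middle_informative (P (S k))
           then Rmax (maxR_sel k P F) (F (S k)) else maxR_sel k P F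
  end.

Definition sumR_sel (n : nat) (P : nat -> Prop) (F : nat -> R) : R :=
  sumR n (fun j => if excluded_middle_informative (P j) then F j else 0).

Definition Lip (a b : R) (F : R -> R) : Rbar :=
  Lub_Rbar (fun r => exists x y, a <= x <= b /\ a <= y <= b /\ x <> y /\
                         r = Rabs (F x - F y) / Rabs (x - y)).

(* inf_{x in [c,d]} F x  (in Rbar; +oo if the interval is empty) *)
Definition inf_on (c d : R) (F : R -> R) : Rbar :=
  Glb_Rbar (fun r => exists x, c <= x <= d /\ r = F x).

Definition Nnet (h : nat) (v w : nat -> R) (theta : nat -> R) (x : R) : R :=
  theta (S h) + sumR h (fun i => v i * clip (w i * x + theta i)).

Definition Risk (a b : R) (h : nat) (v w : nat -> R) (f p : R -> R)
  (theta : nat -> R) : R :=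
  RInt (fun x => (Nnet h v w theta x - f x) ^ 2 * p x) a b.

Definition psi (w theta : nat -> R) (i : nat) : R := - (/ w i) * theta i.

Definition inI (a b : R) (w theta : nat -> R) (i : nat) (x : R) : Prop :=
  (psi w theta i < x < psi w theta i + / w i) /\ (a < x < b).

Definition upd (theta : nat -> R) (k : nat) (t : R) : nat -> R :=
  fun i => if Nat.eqb i k then t else theta i.

Definition partial (F : (nat -> R) -> R) (theta : nat -> R) (k : nat) : R :=
  Derive (fun t => F (upd theta k t)) (theta k).

Definition hess (F : (nat -> R) -> R) (theta : nat -> R) (i j : nat) : R :=
  Derive (fun t => partial F (upd theta i t) j) (theta i).

Definition grad_zero (n : nat) (F : (nat -> R) -> R) (theta : nat -> R) : Prop :=
  forall k, (1 <= k <= n)%nat -> partial F theta k = 0.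

Definition hess_quad (n : nat) (F : (nat -> R) -> R) (theta u : nat -> R) : R :=
  sumR n (fun i => sumR n (fun j => u i * hess F theta i j * u j)).

Definition descending_critical_point (n : nat) (F : (nat -> R) -> R)
  (theta : nat -> R) : Prop :=
  grad_zero n F theta /\ exists u : nat -> R, hess_quad n F theta u < 0.

From Stdlib Require Import Reals Lra Lia FunctionalExtensionality ClassicalEpsilon.
From Coquelicot Require Import Coquelicot.
Open Scope R_scope.

(* Let g = N^theta - f be the residual and, for a neuron i active at x, let
   [l_i, r_i] be the closure of I_i^theta.  Differentiating the risk in the bias
   theta_i gives, at a critical point, that g has zero p-mean on [l_i, r_i]; since
   theta is not a descending critical point, the diagonal Hessian entry is
   nonnegative, which gives g(r_i) p(r_i) - g(l_i) p(l_i) <= v_i w_i int_{l_i}^{r_i} p.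
   On [l_i, r_i] the residual increases with slope at least v_i w_i - Lip(f) > 0,
   and two windows of zero p-mean on which g increases cannot overlap without being
   nested, so the shortest active window [l_t, r_t] lies in all the others.  There g
   has slope at least s = sum_j v_j w_j - Lip(f) over the active j.  Since the window
   has length at most 1/w_t, it lies where p is monotone or where p varies at most by
   a factor 2; in each case comparing the slope with the endpoint bound yields
   s <= 2 v_t w_t, so the sum is below 3 v_t w_t. *)

(** * Clipping, finite sums and selections *)

Lemma clip_abs x : clip x = (Rabs x - Rabs (x - 1) + 1) / 2.
Proof.
  unfold clip, Rmin, Rmax.
  destruct (Rle_dec x 0); destruct (Rle_dec _ 1); unfold Rabs; repeat destruct Rcase_abs; lra.
Qed.

Lemma continuity_clip : continuity clip.
Proof.
  replace clip with (fun x => (Rabs x - Rabs (x - 1) + 1) / 2)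
    by (apply functional_extensionality; intro; symmetry; apply clip_abs).
  reg.
Qed.

Lemma clip_nonpos x : x <= 0 -> clip x = 0.
Proof. intro; rewrite clip_abs; unfold Rabs; repeat destruct Rcase_abs; lra. Qed.

Lemma clip_id x : 0 <= x <= 1 -> clip x = x.
Proof. intro; rewrite clip_abs; unfold Rabs; repeat destruct Rcase_abs; lra. Qed.

Lemma clip_ge1 x : 1 <= x -> clip x = 1.
Proof. intro; rewrite clip_abs; unfold Rabs; repeat destruct Rcase_abs; lra. Qed.

Lemma clip_le x y : x <= y -> clip x <= clip y.
Proof. intro; rewrite !clip_abs; unfold Rabs; repeat destruct Rcase_abs; lra. Qed.

Lemma continuity_clip_affine w s : continuity (fun y => clip (w * y + s)).
Proof.
  intro y. apply (continuity_pt_comp (fun y => w * y + s) clip); [reg | apply continuity_clip].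
Qed.

Lemma sumR_ext n F G : (forall k, (1 <= k <= n)%nat -> F k = G k) -> sumR n F = sumR n G.
Proof.
  induction n as [|n IH]; intros H; simpl; auto.
  rewrite IH by (intros; apply H; lia). rewrite H by lia. reflexivity.
Qed.

Lemma sumR_le n F G : (forall k, (1 <= k <= n)%nat -> F k <= G k) -> sumR n F <= sumR n G.
Proof.
  induction n as [|n IH]; intros H; simpl; [lra|].
  assert (sumR n F <= sumR n G) by (apply IH; intros; apply H; lia).
  assert (F (S n) <= G (S n)) by (apply H; lia). lra.
Qed.

Lemma sumR_sub n F G : sumR n F - sumR n G = sumR n (fun k => F k - G k).
Proof. induction n as [|n IH]; simpl; [ring|]. rewrite <- IH. ring. Qed.

Lemma sumR_mulr n F c : sumR n (fun k => F k * c) = sumR n F * c.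
Proof. induction n as [|n IH]; simpl; [ring|]. rewrite IH. ring. Qed.

Lemma sumR_0 n : sumR n (fun _ => 0) = 0.
Proof. induction n as [|n IH]; simpl; [ring|]. rewrite IH. ring. Qed.

Lemma sumR_delta n i F : (1 <= i <= n)%nat ->
  sumR n (fun k => if Nat.eqb k i then F k else 0) = F i.
Proof.
  induction n as [|n IH]; intros Hi; [lia|]. cbn [sumR].
  destruct (Nat.eqb_spec (S n) i) as [<-|Hne].
  - rewrite (sumR_ext n _ (fun _ => 0)), sumR_0; [ring|].
    intros k Hk. destruct (Nat.eqb_spec k (S n)); [lia|auto].
  - rewrite IH by lia. ring.
Qed.

Lemma sumR_upd n i s (theta : nat -> R) (G : nat -> R -> R) : (1 <= i <= n)%nat ->
  sumR n (fun k => G k (upd theta i s k))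
  = sumR n (fun k => G k (theta k)) - G i (theta i) + G i s.
Proof.
  intros Hi.
  enough (sumR n (fun k => G k (upd theta i s k)) - sumR n (fun k => G k (theta k))
          = G i s - G i (theta i)) by lra.
  rewrite sumR_sub, <- (sumR_delta n i (fun k => G k s - G k (theta k))) by exact Hi.
  apply sumR_ext. intros k _. unfold upd. destruct (Nat.eqb_spec k i); [auto|ring].
Qed.

Lemma continuity_sumR n (F : nat -> R -> R) : (forall k, continuity (F k)) ->
  continuity (fun y => sumR n (fun k => F k y)).
Proof.
  intros H. induction n as [|n IH]; simpl; [apply continuity_const; intros ? ?; auto|].
  apply continuity_plus; auto.
Qed.

Lemma sumR_sel_single n i F : (1 <= i <= n)%nat -> sumR_sel n (fun k => k = i) F = F i.
Proof.
  intros Hi. unfold sumR_sel. rewrite <- (sumR_delta n i F Hi).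
  apply sumR_ext. intros k _.
  destruct excluded_middle_informative; destruct (Nat.eqb_spec k i); congruence.
Qed.

Lemma sumR_sel_none n P F : (forall k, (1 <= k <= n)%nat -> ~ P k) -> sumR_sel n P F = 0.
Proof.
  intros H. unfold sumR_sel. rewrite (sumR_ext n _ (fun _ => 0)) by
    (intros k Hk; destruct excluded_middle_informative as [Pk|];
     [exfalso; exact (H k Hk Pk) | auto]).
  apply sumR_0.
Qed.

Lemma maxR_sel_ge0 n P F : 0 <= maxR_sel n P F.
Proof.
  induction n as [|n IH]; simpl; [lra|].
  destruct excluded_middle_informative; [eapply Rle_trans; [apply IH | apply Rmax_l] | auto].
Qed.

Lemma maxR_sel_ge n P F t : (1 <= t <= n)%nat -> P t -> F t <= maxR_sel n P F.
Proof.
  induction n as [|n IH]; intros Ht HP; [lia|]. simpl.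
  destruct (Nat.eq_dec t (S n)) as [->|Hne].
  - destruct excluded_middle_informative; [apply Rmax_r | contradiction].
  - assert (F t <= maxR_sel n P F) by (apply IH; auto; lia).
    destruct excluded_middle_informative; [eapply Rle_trans; [eauto | apply Rmax_l] | auto].
Qed.

Lemma minR_le n F k : (1 <= k <= n)%nat -> minR n F <= F k.
Proof.
  induction n as [|n IH]; intros Hk; [lia|]. simpl.
  destruct (Nat.eq_dec k (S n)) as [->|Hne]; [apply Rmin_r|].
  eapply Rle_trans; [apply Rmin_l | apply IH; lia].
Qed.

Lemma minR_pos n F : (1 <= n)%nat -> (forall k, (1 <= k <= n)%nat -> 0 < F k) -> 0 < minR n F.
Proof.
  induction n as [|n IH]; intros Hn H; [lia|]. simpl.
  assert (0 < minR n F).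
  { destruct n; [apply H; lia | apply IH; [lia | intros; apply H; lia]]. }
  assert (0 < F (S n)) by (apply H; lia).
  unfold Rmin; destruct Rle_dec; lra.
Qed.

Lemma argmin_sel n (P : nat -> Prop) (F : nat -> R) :
  (exists k, (1 <= k <= n)%nat /\ P k) ->
  exists t, (1 <= t <= n)%nat /\ P t /\ forall k, (1 <= k <= n)%nat -> P k -> F t <= F k.
Proof.
  induction n as [|n IH]; intros [k [Hk HPk]]; [lia|].
  destruct (classic (exists k, (1 <= k <= n)%nat /\ P k)) as [Hex|Hno].
  - destruct (IH Hex) as [t [Ht [HPt Hmin]]].
    assert (Hmin' : forall j, (1 <= j <= S n)%nat -> P j -> j <> S n -> F t <= F j)
      by (intros j Hj HPj Hne; apply Hmin; auto; lia).
    destruct (classic (P (S n))) as [HPS|HPS];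
      [destruct (Rle_dec (F t) (F (S n))) as [Hle|Hlt] |].
    + exists t. split; [lia|]. split; [auto|]. intros j Hj HPj.
      destruct (Nat.eq_dec j (S n)) as [->|]; auto.
    + exists (S n). split; [lia|]. split; [auto|]. intros j Hj HPj.
      destruct (Nat.eq_dec j (S n)) as [->|Hne]; [lra|]. specialize (Hmin' j Hj HPj Hne). lra.
    + exists t. split; [lia|]. split; [auto|]. intros j Hj HPj.
      destruct (Nat.eq_dec j (S n)) as [->|]; [contradiction | auto].
  - assert (k = S n) as ->.
    { destruct (Nat.eq_dec k (S n)); auto. exfalso. apply Hno. exists k. split; auto; lia. }
    exists (S n). split; [lia|]. split; [auto|]. intros j Hj HPj.
    destruct (Nat.eq_dec j (S n)) as [->|]; [lra|].
    exfalso. apply Hno. exists j. split; auto; lia.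
Qed.

(** * Integrals of continuous functions *)

Lemma continuous_of_continuity (f : R -> R) : continuity f -> forall x, continuous f x.
Proof. intros H x. apply continuity_pt_filterlim, H. Qed.

Lemma ex_RInt_continuity f u v : continuity f -> ex_RInt f u v.
Proof.
  intro H. apply (@ex_RInt_continuous R_CompleteNormedModule).
  intros; apply continuous_of_continuity, H.
Qed.

(* Equations coming from Coquelicot live in its module carrier, which [ring] does not
   recognise as [R]; likewise its [RInt] lemmas do not rewrite [R]-valued integrands,
   hence the [R] instances below. *)
Ltac ring_R := lazymatch goal with |- ?x = ?y => change (@eq R x y); ring end.

Section RIntR.
Variables (f g : R -> R) (u v : R).
Hypotheses (Hf : continuity f) (Hg : continuity g).

Lemma RInt_scalR c : RInt (fun y => c * f y) u v = c * RInt f u v.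
Proof. exact (RInt_scal f u v c (ex_RInt_continuity f u v Hf)). Qed.

Lemma RInt_plusR : RInt (fun y => f y + g y) u v = RInt f u v + RInt g u v.
Proof. exact (RInt_plus f g u v (ex_RInt_continuity f u v Hf) (ex_RInt_continuity g u v Hg)). Qed.

Lemma RInt_minusR : RInt (fun y => f y - g y) u v = RInt f u v - RInt g u v.
Proof. exact (RInt_minus f g u v (ex_RInt_continuity f u v Hf) (ex_RInt_continuity g u v Hg)). Qed.

Lemma RInt_ChaslesR z : RInt f u z + RInt f z v = RInt f u v.
Proof.
  exact (RInt_Chasles f u z v (ex_RInt_continuity f u z Hf) (ex_RInt_continuity f z v Hf)).
Qed.

Lemma RInt_le_continuity : u <= v -> (forall y, u <= y <= v -> f y <= g y) ->
  RInt f u v <= RInt g u v.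
Proof.
  intros Huv H. apply RInt_le; auto using ex_RInt_continuity.
  intros; apply H; lra.
Qed.

Lemma RInt_ge0_continuity : u <= v -> (forall y, u <= y <= v -> 0 <= f y) -> 0 <= RInt f u v.
Proof.
  intros Huv H. apply RInt_ge_0; auto using ex_RInt_continuity.
  intros; apply H; lra.
Qed.

Lemma RInt_gt0_continuity : u < v -> (forall y, u < y < v -> 0 < f y) -> 0 < RInt f u v.
Proof.
  intros Huv H. apply RInt_gt_0; auto. intros; apply continuous_of_continuity, Hf.
Qed.

Lemma RInt_reflect : RInt (fun y => f (u + v - y)) u v = RInt f u v.
Proof.
  pose proof (RInt_comp_lin f (-1) (u + v) u v (ex_RInt_continuity _ _ _ Hf)) as E.
  replace (-1 * u + (u + v)) with v in E by ring.
  replace (-1 * v + (u + v)) with u in E by ring.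
  rewrite <- (opp_RInt_swap f u v) in E by apply ex_RInt_continuity, Hf.
  assert (Hc : continuity (fun y => f (-1 * y + (u + v)))).
  { intro y. apply (continuity_pt_comp (fun y => -1 * y + (u + v))); [reg | apply Hf]. }
  rewrite RInt_scal in E by apply ex_RInt_continuity, Hc.
  rewrite (RInt_ext _ (fun y => f (-1 * y + (u + v)))) by (intros; f_equal; ring).
  unfold scal, opp in E; simpl in E; unfold mult in E; simpl in E. lra.
Qed.

End RIntR.

Lemma RInt_constR u v c : RInt (fun _ => c) u v = (v - u) * c.
Proof. exact (RInt_const u v c). Qed.

Lemma RInt_eq0 f u v : (forall y, Rmin u v < y < Rmax u v -> f y = 0) -> RInt f u v = 0.
Proof. intro H. rewrite (RInt_ext f (fun _ => 0)) by auto. rewrite RInt_constR. ring_R. Qed.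

Lemma RInt_id_shift c u v : RInt (fun y => c + y) u v = ((c + v) ^ 2 - (c + u) ^ 2) / 2.
Proof.
  assert (H : is_RInt (fun y => c + y) u v
                (minus ((fun y => (c + y) ^ 2 / 2) v) ((fun y => (c + y) ^ 2 / 2) u))).
  { apply (is_RInt_derive (fun y => (c + y) ^ 2 / 2)).
    - intros y _. auto_derive; auto. field.
    - intros y _. apply continuous_of_continuity. reg. }
  apply (@is_RInt_unique R_CompleteNormedModule) in H. rewrite H.
  unfold minus, plus, opp; simpl. field.
Qed.

Definition prim (g : R -> R) (z : R) : R := RInt g 0 z.

Lemma is_derive_prim g z : continuity g -> is_derive (prim g) z (g z).
Proof.
  intros Hg. apply (is_derive_RInt g (prim g) 0 z).
  - apply filter_forall. intro y.
    apply (@RInt_correct R_CompleteNormedModule), ex_RInt_continuity, Hg.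
  - apply continuous_of_continuity, Hg.
Qed.

Lemma ex_derive_prim g z : continuity g -> ex_derive (prim g) z.
Proof. intros Hg. eexists. apply is_derive_prim, Hg. Qed.

Lemma Derive_prim g z : continuity g -> Derive (prim g) z = g z.
Proof. intros Hg. apply is_derive_unique, is_derive_prim, Hg. Qed.

Lemma RInt_prim g u v : continuity g -> RInt g u v = prim g v - prim g u.
Proof. intro Hg. unfold prim. rewrite <- (RInt_ChaslesR g 0 v Hg u). simpl. lra. Qed.

(** * The risk as a function of one bias *)

Section BiasRisk.
Variables (a b v w : R) (C p : R -> R).
Hypotheses (HC : continuity C) (Hp : continuity p) (Hw : 0 < w).

Definition kink_lo (s : R) : R := - / w * s.
Definition kink_hi (s : R) : R := kink_lo s + / w.

Lemma affine_kink_lo s : w * kink_lo s + s = 0.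
Proof. unfold kink_lo. field. lra. Qed.

Lemma affine_kink_hi s : w * kink_hi s + s = 1.
Proof. unfold kink_hi, kink_lo. field. lra. Qed.

Lemma affine_le0 s y : y <= kink_lo s -> w * y + s <= 0.
Proof. pose proof (affine_kink_lo s). nra. Qed.

Lemma affine_ge1 s y : kink_hi s <= y -> 1 <= w * y + s.
Proof. pose proof (affine_kink_hi s). nra. Qed.

Lemma affine_unit s y : kink_lo s <= y <= kink_hi s -> 0 <= w * y + s <= 1.
Proof. pose proof (affine_kink_lo s); pose proof (affine_kink_hi s). split; nra. Qed.

Lemma kink_lo_lt_hi s : kink_lo s < kink_hi s.
Proof. unfold kink_hi. assert (0 < / w) by (apply Rinv_0_lt_compat, Hw). lra. Qed.

Definition bias_risk (s : R) : R :=
  RInt (fun y => (C y + v * clip (w * y + s)) ^ 2 * p y) a b.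

(* For bounds [A0 <= a], [b <= B0] enclosing both kinks, [bias_risk] splits into the
   pieces where the clip is 0, affine and 1; only the kinks then depend on [s]. *)
Definition bias_risk_prim (A0 B0 s : R) : R :=
  prim (fun y => C y ^ 2 * p y) (kink_lo s) - prim (fun y => C y ^ 2 * p y) A0
  + (prim (fun y => (C y + v * w * y) ^ 2 * p y) (kink_hi s)
     - prim (fun y => (C y + v * w * y) ^ 2 * p y) (kink_lo s))
  + 2 * v * s * (prim (fun y => (C y + v * w * y) * p y) (kink_hi s)
                 - prim (fun y => (C y + v * w * y) * p y) (kink_lo s))
  + v * v * s * s * (prim p (kink_hi s) - prim p (kink_lo s))
  + (prim (fun y => (C y + v) ^ 2 * p y) B0 - prim (fun y => (C y + v) ^ 2 * p y) (kink_hi s)).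

Definition bias_risk_d1 (s : R) : R :=
  2 * v * RInt (fun y => (C y + v * (w * y + s)) * p y) (kink_lo s) (kink_hi s).

Definition bias_risk_d2 (s : R) : R :=
  2 * v * (v * RInt p (kink_lo s) (kink_hi s)
           - / w * ((C (kink_hi s) + v) * p (kink_hi s) - C (kink_lo s) * p (kink_lo s))).

Lemma bias_risk_d1_prim s : bias_risk_d1 s =
  2 * v * (prim (fun y => (C y + v * w * y) * p y) (kink_hi s)
           - prim (fun y => (C y + v * w * y) * p y) (kink_lo s))
  + 2 * v * v * s * (prim p (kink_hi s) - prim p (kink_lo s)).
Proof.
  unfold bias_risk_d1.
  rewrite (RInt_ext _ (fun y => (C y + v * w * y) * p y + (v * s) * p y)) by (intros; ring_R).
  rewrite RInt_plusR, RInt_scalR by reg.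
  rewrite !RInt_prim by reg. ring_R.
Qed.

Lemma is_derive_bias_risk_prim A0 B0 s : is_derive (bias_risk_prim A0 B0) s (bias_risk_d1 s).
Proof.
  unfold bias_risk_prim, kink_hi, kink_lo. auto_derive.
  - repeat split; apply ex_derive_prim; reg.
  - rewrite bias_risk_d1_prim, !Derive_prim by reg. unfold kink_hi, kink_lo. field. lra.
Qed.

Lemma is_derive_bias_risk_d1 s : is_derive bias_risk_d1 s (bias_risk_d2 s).
Proof.
  eapply is_derive_ext; [intro t; symmetry; apply bias_risk_d1_prim|].
  unfold kink_hi, kink_lo. auto_derive.
  - repeat split; apply ex_derive_prim; reg.
  - unfold bias_risk_d2. rewrite RInt_prim, !Derive_prim by reg.
    unfold kink_hi, kink_lo. field. lra.
Qed.

Hypotheses (Hpa : forall y, y <= a -> p y = 0) (Hpb : forall y, b <= y -> p y = 0).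

Lemma bias_risk_primE A0 B0 s : A0 <= a -> b <= B0 -> A0 <= kink_lo s -> kink_hi s <= B0 ->
  bias_risk s = bias_risk_prim A0 B0 s.
Proof.
  intros HA HB Hl Hh.
  set (F := fun y => (C y + v * clip (w * y + s)) ^ 2 * p y).
  assert (HF : continuity F).
  { pose proof (continuity_clip_affine w s) as Hc. set (c := fun y => clip (w * y + s)) in Hc.
    change (continuity (fun y => (C y + v * c y) ^ 2 * p y)). reg. }
  pose proof (kink_lo_lt_hi s).
  assert (Hsupp : bias_risk s = RInt F A0 B0).
  { unfold bias_risk. fold F.
    rewrite <- (RInt_ChaslesR F A0 B0 HF b), <- (RInt_ChaslesR F A0 b HF a).
    rewrite (RInt_eq0 F A0 a), (RInt_eq0 F b B0); [simpl; lra | |];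
      intros y Hy; unfold Rmin, Rmax in Hy; unfold F.
    - rewrite Hpb by (destruct Rle_dec; lra). ring_R.
    - rewrite Hpa by (destruct Rle_dec; lra). ring_R. }
  rewrite Hsupp, <- (RInt_ChaslesR F A0 B0 HF (kink_hi s)),
    <- (RInt_ChaslesR F A0 (kink_hi s) HF (kink_lo s)).
  rewrite (RInt_ext F (fun y => C y ^ 2 * p y) A0 (kink_lo s)).
  2:{ intros y Hy. unfold F. rewrite clip_nonpos; [ring_R|]. apply affine_le0.
      unfold Rmin, Rmax in Hy; destruct Rle_dec; lra. }
  rewrite (RInt_ext F (fun y => (C y + v) ^ 2 * p y) (kink_hi s) B0).
  2:{ intros y Hy. unfold F. rewrite clip_ge1; [ring_R|]. apply affine_ge1.
      unfold Rmin, Rmax in Hy; destruct Rle_dec; lra. }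
  rewrite (RInt_ext F (fun y => ((C y + v * w * y) ^ 2 * p y
                                 + (2 * v * s) * ((C y + v * w * y) * p y))
                                + (v * v * s * s) * p y) (kink_lo s) (kink_hi s)).
  2:{ intros y Hy. unfold F. rewrite clip_id; [ring_R|]. apply affine_unit.
      unfold Rmin, Rmax in Hy; destruct Rle_dec; lra. }
  rewrite !RInt_plusR, !RInt_scalR by reg.
  rewrite !RInt_prim by reg.
  unfold bias_risk_prim. ring_R.
Qed.

Lemma is_derive_bias_risk s : is_derive bias_risk s (bias_risk_d1 s).
Proof.
  set (A0 := Rmin a (kink_lo s - / w)). set (B0 := Rmax b (kink_hi s + / w)).
  assert (0 < / w) by (apply Rinv_0_lt_compat, Hw).
  apply (is_derive_ext_loc (bias_risk_prim A0 B0)); [|apply is_derive_bias_risk_prim].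
  exists (mkposreal 1 Rlt_0_1). intros t Ht. change (Rabs (t - s) < 1) in Ht.
  apply Rabs_def2 in Ht.
  symmetry. apply bias_risk_primE.
  - apply Rmin_l.
  - apply Rmax_l.
  - eapply Rle_trans; [apply Rmin_r|]. unfold kink_lo. nra.
  - eapply Rle_trans; [|apply Rmax_r]. unfold kink_hi, kink_lo. nra.
Qed.

End BiasRisk.

Lemma continuity_Nnet h v w theta : continuity (Nnet h v w theta).
Proof.
  apply continuity_plus; [apply continuity_const; intros ? ?; auto|].
  apply (continuity_sumR h (fun k y => v k * clip (w k * y + theta k))).
  intros k y. apply continuity_pt_mult; [apply continuity_pt_const; intros ? ?; auto|].
  apply continuity_clip_affine.
Qed.

Lemma upd_upd (theta : nat -> R) i s t : upd (upd theta i s) i t = upd theta i t.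
Proof. apply functional_extensionality. intro k. unfold upd. destruct (Nat.eqb k i); auto. Qed.

Lemma upd_same (theta : nat -> R) i s : upd theta i s i = s.
Proof. unfold upd. rewrite Nat.eqb_refl. auto. Qed.

Lemma upd_id (theta : nat -> R) i : upd theta i (theta i) = theta.
Proof.
  apply functional_extensionality. intro k. unfold upd.
  destruct (Nat.eqb_spec k i) as [->|]; auto.
Qed.

Definition residual_without (h : nat) (v w : nat -> R) (f : R -> R) theta i y :=
  Nnet h v w theta y - v i * clip (w i * y + theta i) - f y.

Lemma continuity_residual_without h v w f theta i :
  continuity f -> continuity (residual_without h v w f theta i).
Proof.
  intro Hf. pose proof (continuity_Nnet h v w theta).
  pose proof (continuity_clip_affine (w i) (theta i)) as Hc.
  set (c := fun y => clip (w i * y + theta i)) in Hc.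
  change (continuity (fun y => Nnet h v w theta y - v i * c y - f y)). reg.
Qed.

Section RiskAlongBias.
Variables (a b : R) (h : nat) (v w : nat -> R) (f p : R -> R) (theta : nat -> R) (i : nat).
Hypotheses (Hi : (1 <= i <= h)%nat) (Hw : 0 < w i).
Hypotheses (Hf : continuity f) (Hp : continuity p).
Hypotheses (Hpa : forall y, y <= a -> p y = 0) (Hpb : forall y, b <= y -> p y = 0).

Let C := residual_without h v w f theta i.

Lemma Risk_upd s : Risk a b h v w f p (upd theta i s) = bias_risk a b (v i) (w i) C p s.
Proof.
  unfold Risk, bias_risk. f_equal. apply functional_extensionality. intro y.
  unfold C, residual_without, Nnet.
  rewrite (sumR_upd h i s theta (fun k t => v k * clip (w k * y + t))) by exact Hi.
  unfold upd at 1. destruct (Nat.eqb_spec (S h) i); [lia|]. ring.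
Qed.

Lemma partial_Risk_upd s :
  partial (Risk a b h v w f p) (upd theta i s) i = bias_risk_d1 (v i) (w i) C p s.
Proof.
  unfold partial. rewrite upd_same.
  rewrite (Derive_ext _ (bias_risk a b (v i) (w i) C p))
    by (intro; rewrite upd_upd; apply Risk_upd).
  apply is_derive_unique, is_derive_bias_risk; auto.
  apply continuity_residual_without, Hf.
Qed.

Lemma partial_Risk :
  partial (Risk a b h v w f p) theta i = bias_risk_d1 (v i) (w i) C p (theta i).
Proof. rewrite <- partial_Risk_upd, upd_id. reflexivity. Qed.

Lemma hess_Risk_diag :
  hess (Risk a b h v w f p) theta i i = bias_risk_d2 (v i) (w i) C p (theta i).
Proof.
  unfold hess. rewrite (Derive_ext _ (bias_risk_d1 (v i) (w i) C p)) by apply partial_Risk_upd.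
  apply is_derive_unique, is_derive_bias_risk_d1; auto.
  apply continuity_residual_without, Hf.
Qed.

End RiskAlongBias.

Lemma hess_quad_basis n F theta i : (1 <= i <= n)%nat ->
  hess_quad n F theta (fun k => if Nat.eqb k i then 1 else 0) = hess F theta i i.
Proof.
  intros Hi. unfold hess_quad. rewrite <- (sumR_delta n i (fun k => hess F theta k i) Hi).
  apply sumR_ext. intros k _.
  transitivity (sumR n (fun j => if Nat.eqb j i
                                 then (if Nat.eqb k i then 1 else 0) * hess F theta k j else 0)).
  - apply sumR_ext. intros j _. destruct (Nat.eqb j i); ring.
  - rewrite sumR_delta by exact Hi. destruct (Nat.eqb k i); ring.
Qed.

(** * Lipschitz constants *)

Lemma Lip_ge_ratio a b F y z : a <= y <= b -> a <= z <= b -> y <> z ->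
  Rbar_le (Finite (Rabs (F y - F z) / Rabs (y - z))) (Lip a b F).
Proof.
  intros Hy Hz Hyz. apply Lub_Rbar_correct. exists y, z. repeat split; auto; lra.
Qed.

Lemma Lip_pinfty_or_nonneg a b F : a < b ->
  Lip a b F = p_infty \/ exists L, Lip a b F = Finite L /\ 0 <= L.
Proof.
  intros Hab. pose proof (Lip_ge_ratio a b F a b) as H.
  assert (0 <= Rabs (F a - F b) / Rabs (a - b)).
  { apply Rmult_le_pos; [apply Rabs_pos|]. left; apply Rinv_0_lt_compat, Rabs_pos_lt; lra. }
  destruct (Lip a b F) as [L| |]; simpl in H.
  - right. exists L. split; auto. eapply Rle_trans; [|apply H]; auto; lra.
  - left; reflexivity.
  - exfalso. apply H; lra.
Qed.

Lemma Lip_bound a b F L : Lip a b F = Finite L ->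
  forall y z, a <= y <= b -> a <= z <= b -> Rabs (F y - F z) <= L * Rabs (y - z).
Proof.
  intros HL y z Hy Hz. destruct (Req_dec y z) as [->|Hne].
  - rewrite !Rminus_diag, Rabs_R0. lra.
  - pose proof (Lip_ge_ratio a b F y z Hy Hz Hne) as H. rewrite HL in H. simpl in H.
    assert (0 < Rabs (y - z)) by (apply Rabs_pos_lt; lra).
    apply Rmult_le_compat_r with (r := Rabs (y - z)) in H; [|lra].
    field_simplify in H; lra.
Qed.

Lemma Lip_lt_finite a b F c : a < b -> Rbar_lt (Lip a b F) (Finite c) ->
  exists L, Lip a b F = Finite L /\ 0 <= L /\ L < c.
Proof.
  intros Hab H. destruct (Lip_pinfty_or_nonneg a b F Hab) as [E | [L [E HL]]]; rewrite E in H.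
  - contradiction.
  - exists L. auto.
Qed.

Lemma inf_on_le c d F z : c <= z <= d -> Rbar_le (inf_on c d F) (Finite (F z)).
Proof. intros Hz. apply Glb_Rbar_correct. exists z. auto. Qed.

Lemma Lip_le_inf_on a b F m c d : a < b -> 0 < m -> c <= d ->
  Rbar_le (Rbar_mult (Finite (/ m)) (Lip a b F)) (inf_on c d F) ->
  exists L, Lip a b F = Finite L /\ 0 <= L /\ forall z, c <= z <= d -> / m * L <= F z.
Proof.
  intros Hab Hm Hcd H.
  assert (Hle : forall z, c <= z <= d ->
            Rbar_le (Rbar_mult (Finite (/ m)) (Lip a b F)) (Finite (F z)))
    by (intros z Hz; eapply Rbar_le_trans; [apply H | apply inf_on_le, Hz]).
  assert (Hm0 : 0 < / m) by (apply Rinv_0_lt_compat, Hm).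
  destruct (Lip_pinfty_or_nonneg a b F Hab) as [E | [L [E HL]]].
  - exfalso. specialize (Hle c ltac:(lra)). rewrite E in Hle.
    unfold Rbar_mult, Rbar_mult' in Hle.
    destruct (Rle_dec 0 (/ m)) as [Hm1|Hm1]; [|lra].
    destruct (Rle_lt_or_eq_dec 0 (/ m) Hm1); [exact Hle | lra].
  - exists L. split; [exact E|]. split; [exact HL|]. intros z Hz.
    specialize (Hle z Hz). rewrite E in Hle. exact Hle.
Qed.

Lemma Lipschitz_doubling a b F L m u z : a <= u -> u <= z -> z <= b -> z - u <= / m ->
  (forall y y', a <= y <= b -> a <= y' <= b -> Rabs (F y - F y') <= L * Rabs (y - y')) ->
  0 <= L -> / m * L <= F u -> / m * L <= F z ->
  forall y, u <= y <= z -> F y <= 2 * F u /\ F y <= 2 * F z.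
Proof.
  intros Hau Huz Hzb Hlen HL HL0 Hu Hz y Hy.
  assert (HLlen : L * (z - u) <= / m * L)
    by (rewrite (Rmult_comm (/ m)); apply Rmult_le_compat_l; lra).
  pose proof (HL y u ltac:(lra) ltac:(lra)); pose proof (HL y z ltac:(lra) ltac:(lra)).
  rewrite (Rabs_right (y - u)) in * by lra. rewrite (Rabs_left1 (y - z)) in * by lra.
  pose proof (Rle_abs (F y - F u)); pose proof (Rle_abs (F y - F z)).
  split; nra.
Qed.

(** * Increasing functions of zero weighted mean *)

Definition slope_ge (g : R -> R) (s u z : R) : Prop :=
  forall y y', u <= y <= y' -> y' <= z -> s * (y' - y) <= g y' - g y.

Lemma slope_ge_reflect g s u z : slope_ge g s u z -> slope_ge (fun y => - g (u + z - y)) s u z.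
Proof. intros H y y' Hy Hy'. pose proof (H (u + z - y') (u + z - y)). lra. Qed.

Lemma slope_ge_le g s u z y y' : slope_ge g s u z -> 0 <= s -> u <= y <= y' -> y' <= z ->
  g y <= g y'.
Proof.
  intros H Hs Hy Hy'. pose proof (H y y' Hy Hy').
  assert (0 <= s * (y' - y)) by (apply Rmult_le_pos; lra). lra.
Qed.

Section WeightedZeroMean.
Variables (g p : R -> R).
Hypotheses (Hg : continuity g) (Hp : continuity p) (Hp0 : forall y, 0 <= p y).

Lemma RInt_weighted_le u z K : u <= z -> (forall y, u <= y <= z -> g y <= K) ->
  RInt (fun y => g y * p y) u z <= K * RInt p u z.
Proof.
  intros Huz HK. rewrite <- RInt_scalR by exact Hp.
  apply RInt_le_continuity; [reg | reg | exact Huz |].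
  intros y Hy. pose proof (HK y Hy). pose proof (Hp0 y). nra.
Qed.

Lemma RInt_weighted_ge u z K : u <= z -> (forall y, u <= y <= z -> K <= g y) ->
  K * RInt p u z <= RInt (fun y => g y * p y) u z.
Proof.
  intros Huz HK. rewrite <- RInt_scalR by exact Hp.
  apply RInt_le_continuity; [reg | reg | exact Huz |].
  intros y Hy. pose proof (HK y Hy). pose proof (Hp0 y). nra.
Qed.

Lemma zero_mean_ends_sign u z s : u < z -> 0 < RInt p u z ->
  RInt (fun y => g y * p y) u z = 0 -> 0 <= s -> slope_ge g s u z ->
  g u <= 0 <= g z.
Proof.
  intros Huz HPi Hmean Hs Hsl.
  assert (Hu : g u * RInt p u z <= 0).
  { rewrite <- Hmean. apply RInt_weighted_ge; [lra|].
    intros y Hy. apply (slope_ge_le g s u z); auto; lra. }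
  assert (Hz : 0 <= g z * RInt p u z).
  { rewrite <- Hmean. apply RInt_weighted_le; [lra|].
    intros y Hy. apply (slope_ge_le g s u z); auto; lra. }
  split; nra.
Qed.

(* Bathtub principle: for a fixed mass [RInt p u z] under the density bound [M],
   [RInt (z - y) p] is smallest when the mass sits on [z - RInt p u z / M, z]. *)
Lemma RInt_mass_sq_le u z M : u < z -> 0 < M -> (forall y, u <= y <= z -> p y <= M) ->
  RInt p u z ^ 2 <= 2 * M * RInt (fun y => (z - y) * p y) u z.
Proof.
  intros Huz HM HpM.
  set (Pi := RInt p u z).
  assert (HPi0 : 0 <= Pi) by (apply RInt_ge0_continuity; auto; lra).
  assert (HPi1 : Pi <= (z - u) * M).
  { rewrite <- RInt_constR. apply RInt_le_continuity; auto; [reg | lra]. }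
  set (lam := Pi / M).
  assert (Hlam : lam * M = Pi) by (unfold lam; field; lra).
  assert (Hl0 : 0 <= lam)
    by (unfold lam; apply Rmult_le_pos; [lra | left; apply Rinv_0_lt_compat, HM]).
  assert (Hl1 : lam <= z - u) by nra.
  set (m := z - lam).
  assert (cq : continuity (fun y => (z - y) * p y)) by reg.
  assert (Hfar : lam * RInt p u m <= RInt (fun y => (z - y) * p y) u m).
  { rewrite <- RInt_scalR by exact Hp.
    apply RInt_le_continuity; [reg | exact cq | unfold m; lra |].
    intros y Hy. pose proof (Hp0 y). unfold m in Hy. nra. }
  assert (Hnear : lam * RInt p m z - M * (lam ^ 2 / 2) <= RInt (fun y => (z - y) * p y) m z).
  { replace (M * (lam ^ 2 / 2)) with (M * RInt (fun y => (lam - z) + y) m z)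
      by (rewrite RInt_id_shift; unfold m; field).
    rewrite <- !RInt_scalR, <- RInt_minusR by reg.
    apply RInt_le_continuity; [reg | exact cq | unfold m; lra |].
    intros y Hy. pose proof (HpM y ltac:(unfold m in Hy; lra)). pose proof (Hp0 y).
    unfold m in Hy. nra. }
  rewrite <- (RInt_ChaslesR _ u z cq m).
  pose proof (RInt_ChaslesR p u z Hp m) as Hsplit. fold Pi in Hsplit.
  assert (Pi ^ 2 = 2 * M * (lam * Pi - M * (lam ^ 2 / 2))) by (rewrite <- Hlam; field).
  nra.
Qed.

Section Slope.
Variables (u z s c : R).
Hypotheses (Huz : u < z) (HPi : 0 < RInt p u z) (Hmean : RInt (fun y => g y * p y) u z = 0).
Hypotheses (Hs : 0 < s) (Hsl : slope_ge g s u z).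
Hypothesis (Hends : g z * p z - g u * p u <= c * RInt p u z).

Lemma slope_le_incr_weight : 0 < p z -> (forall y, u <= y <= z -> p y <= p z) -> s <= 2 * c.
Proof.
  intros Hpz Hmon.
  destruct (zero_mean_ends_sign u z s) as [Hgu Hgz]; auto; try lra.
  set (Pi := RInt p u z) in *.
  assert (Hgz_c : g z * p z <= c * Pi) by (pose proof (Hp0 u); nra).
  set (Rz := RInt (fun y => (z - y) * p y) u z).
  assert (Hmoment : s * Rz <= g z * Pi).
  { replace (g z * Pi) with (RInt (fun y => g z * p y - g y * p y) u z)
      by (rewrite RInt_minusR, RInt_scalR, Hmean by reg; unfold Pi; ring_R).
    unfold Rz. rewrite <- RInt_scalR by reg.
    apply RInt_le_continuity; [reg | reg | lra |]. intros y Hy.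
    pose proof (Hsl y z ltac:(lra) ltac:(lra)). pose proof (Hp0 y). nra. }
  pose proof (RInt_mass_sq_le u z (p z) Huz Hpz Hmon). fold Pi Rz in H.
  assert (s * Pi ^ 2 <= 2 * c * Pi ^ 2) by nra.
  apply Rmult_le_reg_r with (Pi ^ 2); nra.
Qed.

Lemma slope_le_flat_weight : 0 < p u -> 0 < p z ->
  (forall y, u <= y <= z -> p y <= 2 * p u /\ p y <= 2 * p z) -> s <= 2 * c.
Proof.
  intros Hpu Hpz Hflat.
  destruct (zero_mean_ends_sign u z s) as [Hgu Hgz]; auto; try lra.
  set (Pe := Rmin (p u) (p z)).
  assert (Pe <= p u) by apply Rmin_l.
  assert (Pe <= p z) by apply Rmin_r.
  assert (0 < Pe) by (unfold Pe, Rmin; destruct Rle_dec; lra).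
  assert (HPi2 : RInt p u z <= (z - u) * (2 * Pe)).
  { rewrite <- RInt_constR. apply RInt_le_continuity; [exact Hp | reg | lra |].
    intros y Hy. destruct (Hflat y Hy). unfold Pe, Rmin; destruct Rle_dec; lra. }
  assert (Pe * (g z - g u) <= g z * p z - g u * p u) by nra.
  assert (0 <= c) by nra.
  assert (s * (z - u) <= g z - g u) by (apply Hsl; lra).
  assert (Pe * (s * (z - u)) <= c * ((z - u) * (2 * Pe))) by nra.
  apply Rmult_le_reg_r with (Pe * (z - u)); nra.
Qed.

End Slope.

(* With a1 < a2 < b1 < b2, split both windows at a2 and b1.  If g(a2) >= 0, the
   pieces [a2, b1] and [b1, b2] carry positive total weighted mass; otherwise
   [a1, a2] is negative, so [a2, b1] is positive and [b1, b2] negative, whence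
   g(b1) < 0 and [a2, b1] is nonpositive after all. *)
Lemma zero_mean_windows_nest a1 b1 a2 b2 s1 s2 :
  a1 < a2 -> a2 < b1 -> b1 < b2 -> (forall y, a1 < y < b2 -> 0 < p y) ->
  RInt (fun y => g y * p y) a1 b1 = 0 -> RInt (fun y => g y * p y) a2 b2 = 0 ->
  0 < s1 -> slope_ge g s1 a1 b1 -> 0 < s2 -> slope_ge g s2 a2 b2 ->
  False.
Proof.
  intros H12 H21 H22 Hpos G1 G2 Hs1 Sl1 Hs2 Sl2.
  assert (Hgp : continuity (fun y => g y * p y)) by reg.
  set (m1 := RInt (fun y => g y * p y) a1 a2).
  set (m2 := RInt (fun y => g y * p y) a2 b1).
  set (m3 := RInt (fun y => g y * p y) b1 b2).
  assert (E1 : m1 + m2 = 0) by (rewrite <- G1; apply RInt_ChaslesR, Hgp).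
  assert (E2 : m2 + m3 = 0) by (rewrite <- G2; apply RInt_ChaslesR, Hgp).
  assert (P1 : 0 < RInt p a1 a2) by (apply RInt_gt0_continuity; auto; intros; apply Hpos; lra).
  assert (P3 : 0 < RInt p b1 b2) by (apply RInt_gt0_continuity; auto; intros; apply Hpos; lra).
  assert (P2 : 0 <= RInt p a2 b1) by (apply RInt_ge0_continuity; auto; lra).
  assert (B1 : m1 <= g a2 * RInt p a1 a2).
  { apply RInt_weighted_le; [lra|]. intros y Hy. apply (slope_ge_le g s1 a1 b1); auto; lra. }
  assert (B2 : g a2 * RInt p a2 b1 <= m2).
  { apply RInt_weighted_ge; [lra|]. intros y Hy. apply (slope_ge_le g s1 a1 b1); auto; lra. }
  assert (B3 : m2 <= g b1 * RInt p a2 b1).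
  { apply RInt_weighted_le; [lra|]. intros y Hy. apply (slope_ge_le g s1 a1 b1); auto; lra. }
  assert (B4 : g b1 * RInt p b1 b2 <= m3).
  { apply RInt_weighted_ge; [lra|]. intros y Hy. apply (slope_ge_le g s2 a2 b2); auto; lra. }
  assert (g a2 < g b1).
  { pose proof (Sl1 a2 b1 ltac:(lra) ltac:(lra)). assert (0 < s1 * (b1 - a2)) by nra. lra. }
  destruct (Rle_dec 0 (g a2)) as [Hg2|Hg2].
  - assert (0 < g b1 * RInt p b1 b2) by (apply Rmult_lt_0_compat; lra).
    assert (0 <= g a2 * RInt p a2 b1) by (apply Rmult_le_pos; lra).
    lra.
  - assert (g a2 * RInt p a1 a2 < 0) by (apply Rmult_neg_pos; lra).
    assert (g b1 < 0) by nra.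
    assert (g b1 * RInt p a2 b1 <= 0) by nra.
    lra.
Qed.

End WeightedZeroMean.

Lemma slope_le_decr_weight g p u z s c : continuity g -> continuity p -> (forall y, 0 <= p y) ->
  u < z -> 0 < RInt p u z -> RInt (fun y => g y * p y) u z = 0 ->
  0 < s -> slope_ge g s u z -> g z * p z - g u * p u <= c * RInt p u z ->
  0 < p u -> (forall y, u <= y <= z -> p y <= p u) -> s <= 2 * c.
Proof.
  intros Hg Hp Hp0 Huz HPi Hmean Hs Hsl Hends Hpu Hmon.
  set (G := fun y => - g (u + z - y)). set (Q := fun y => p (u + z - y)).
  assert (HG : continuity G).
  { intro y. apply continuity_pt_opp, (continuity_pt_comp (fun y => u + z - y)); [reg | apply Hg]. }
  assert (HQ : continuity Q).
  { intro y. apply (continuity_pt_comp (fun y => u + z - y)); [reg | apply Hp]. }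
  assert (HQi : RInt Q u z = RInt p u z) by apply RInt_reflect, Hp.
  assert (HGQ : RInt (fun y => G y * Q y) u z = 0).
  { rewrite (RInt_ext _ (fun y => -1 * (g (u + z - y) * p (u + z - y))))
      by (intros; unfold G, Q; ring_R).
    rewrite RInt_scalR, (RInt_reflect (fun y => g y * p y)), Hmean by reg. ring_R. }
  apply (slope_le_incr_weight G Q HG HQ (fun y => Hp0 _) u z s c); auto.
  - rewrite HQi. exact HPi.
  - apply slope_ge_reflect, Hsl.
  - rewrite HQi. unfold G, Q.
    replace (u + z - z) with u by ring. replace (u + z - u) with z by ring. lra.
  - unfold Q. replace (u + z - z) with u by ring. exact Hpu.
  - intros y Hy. unfold Q. replace (u + z - z) with u by ring. apply Hmon. lra.
Qed.

(** * The residual of the network *)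

Lemma RInt_clamp q a b l r : continuity q ->
  (forall y, y <= a -> q y = 0) -> (forall y, b <= y -> q y = 0) ->
  Rmax a l <= Rmin b r -> RInt q l r = RInt q (Rmax a l) (Rmin b r).
Proof.
  intros Hq Ha Hb Hlr.
  rewrite <- (RInt_ChaslesR q l r Hq (Rmin b r)), <- (RInt_ChaslesR q l (Rmin b r) Hq (Rmax a l)).
  rewrite (RInt_eq0 q l (Rmax a l)), (RInt_eq0 q (Rmin b r) r); [simpl; lra | |].
  - intros y Hy. apply Hb. revert Hlr Hy. unfold Rmin, Rmax. repeat destruct Rle_dec; lra.
  - intros y Hy. apply Ha. revert Hlr Hy. unfold Rmin, Rmax. repeat destruct Rle_dec; lra.
Qed.

Section Network.
Variables (a b : R) (h : nat) (v w : nat -> R) (f p : R -> R) (theta : nat -> R).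
Hypotheses (Hab : a < b) (Hv : forall i, (1 <= i <= h)%nat -> 0 < v i)
  (Hw : forall i, (1 <= i <= h)%nat -> 0 < w i).
Hypotheses (Hf : continuity f) (Hp : continuity p) (Hp0 : forall y, 0 <= p y)
  (Hpos : forall y, 0 < p y <-> a < y < b).

Lemma p_zero_left y : y <= a -> p y = 0.
Proof. intro Hy. destruct (Hp0 y) as [H|H]; auto. apply Hpos in H. lra. Qed.

Lemma p_zero_right y : b <= y -> p y = 0.
Proof. intro Hy. destruct (Hp0 y) as [H|H]; auto. apply Hpos in H. lra. Qed.

Definition residual (y : R) : R := Nnet h v w theta y - f y.

Lemma continuity_residual : continuity residual.
Proof. apply continuity_minus; [apply continuity_Nnet | exact Hf]. Qed.

Definition win_lo (i : nat) : R := Rmax a (psi w theta i).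
Definition win_hi (i : nat) : R := Rmin b (psi w theta i + / w i).

Section Window.
Variables (i : nat) (x : R).
Hypotheses (Hi : (1 <= i <= h)%nat) (Hx : inI a b w theta i x).

Let wi_pos : 0 < w i := Hw i Hi.
Let win_loE : win_lo i = Rmax a (kink_lo (w i) (theta i)) := eq_refl.
Let win_hiE : win_hi i = Rmin b (kink_hi (w i) (theta i)) := eq_refl.

Lemma window_contains : win_lo i < x < win_hi i.
Proof.
  destruct Hx as [[Hl Hr] [Ha Hb]]. unfold win_lo, win_hi, Rmax, Rmin.
  split; destruct Rle_dec; lra.
Qed.

Lemma window_ab : a <= win_lo i /\ win_hi i <= b.
Proof. split; [apply Rmax_l | apply Rmin_l]. Qed.

Lemma window_length : win_hi i - win_lo i <= / w i.
Proof.
  pose proof (Rmax_r a (psi w theta i)); pose proof (Rmin_r b (psi w theta i + / w i)).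
  unfold win_lo, win_hi. lra.
Qed.

Lemma window_linear y : win_lo i <= y <= win_hi i -> 0 <= w i * y + theta i <= 1.
Proof.
  intro Hy. apply (affine_unit (w i) wi_pos). rewrite win_loE, win_hiE in Hy.
  pose proof (Rmax_r a (kink_lo (w i) (theta i))); pose proof (Rmin_r b (kink_hi (w i) (theta i))).
  lra.
Qed.

Lemma residual_mean_zero : partial (Risk a b h v w f p) theta i = 0 ->
  RInt (fun y => residual y * p y) (win_lo i) (win_hi i) = 0.
Proof.
  intro Hcrit.
  rewrite (partial_Risk a b h v w f p theta i Hi wi_pos Hf Hp p_zero_left p_zero_right) in Hcrit.
  unfold bias_risk_d1 in Hcrit.
  pose proof (Hv i Hi). pose proof window_contains.
  rewrite win_loE, win_hiE, <- RInt_clamp.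
  - rewrite (RInt_ext _ (fun y => (residual_without h v w f theta i y
                                   + v i * (w i * y + theta i)) * p y)); [nra|].
    intros y Hy. unfold residual_without, residual.
    rewrite (clip_id (w i * y + theta i)); [ring_R|].
    apply (affine_unit (w i) wi_pos). unfold Rmin, Rmax in Hy.
    pose proof (kink_lo_lt_hi (w i) wi_pos (theta i)). destruct Rle_dec; lra.
  - apply continuity_mult; [apply continuity_residual | exact Hp].
  - intros y Hy. rewrite p_zero_left by exact Hy. ring.
  - intros y Hy. rewrite p_zero_right by exact Hy. ring.
  - rewrite <- win_loE, <- win_hiE. lra.
Qed.

Lemma residual_ends_le : 0 <= hess (Risk a b h v w f p) theta i i ->
  residual (win_hi i) * p (win_hi i) - residual (win_lo i) * p (win_lo i)
  <= v i * w i * RInt p (win_lo i) (win_hi i).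
Proof.
  intro Hconv.
  rewrite (hess_Risk_diag a b h v w f p theta i Hi wi_pos Hf Hp p_zero_left p_zero_right) in Hconv.
  unfold bias_risk_d2 in Hconv.
  set (l := kink_lo (w i) (theta i)) in *. set (r := kink_hi (w i) (theta i)) in *.
  assert (Er : residual_without h v w f theta i r + v i = residual r).
  { unfold residual_without, residual, r. rewrite affine_kink_hi, clip_ge1 by lra. ring. }
  assert (El : residual_without h v w f theta i l = residual l).
  { unfold residual_without, residual, l. rewrite affine_kink_lo, clip_nonpos by lra. ring. }
  rewrite Er, El in Hconv.
  assert (Eqr : residual r * p r = residual (win_hi i) * p (win_hi i)).
  { rewrite win_hiE. fold r. unfold Rmin. destruct Rle_dec; auto.
    rewrite !p_zero_right by lra. ring. }
  assert (Eql : residual l * p l = residual (win_lo i) * p (win_lo i)).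
  { rewrite win_loE. fold l. unfold Rmax. destruct Rle_dec; auto.
    rewrite !p_zero_left by lra. ring. }
  assert (Eqp : RInt p l r = RInt p (win_lo i) (win_hi i)).
  { pose proof window_contains.
    rewrite win_loE, win_hiE. apply RInt_clamp; auto using p_zero_left, p_zero_right.
    rewrite <- win_loE, <- win_hiE. lra. }
  rewrite <- Eqr, <- Eql, <- Eqp.
  pose proof (Hv i Hi).
  assert (0 <= v i * RInt p l r - / w i * (residual r * p r - residual l * p l)) by nra.
  assert (w i * (/ w i * (residual r * p r - residual l * p l))
          = residual r * p r - residual l * p l) by (field; lra).
  nra.
Qed.

End Window.

Lemma residual_slope (P : nat -> Prop) Lf u z :
  (forall y y', a <= y <= b -> a <= y' <= b -> Rabs (f y - f y') <= Lf * Rabs (y - y')) ->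
  a <= u -> z <= b ->
  (forall k, (1 <= k <= h)%nat -> P k -> forall y, u <= y <= z -> 0 <= w k * y + theta k <= 1) ->
  slope_ge residual (sumR_sel h P (fun j => v j * w j) - Lf) u z.
Proof.
  intros HfL Hu Hz Hlin y y' Hy Hy'.
  assert (Hf_le : f y' - f y <= Lf * (y' - y)).
  { pose proof (HfL y' y ltac:(lra) ltac:(lra)) as T. rewrite (Rabs_right (y' - y)) in T by lra.
    pose proof (Rle_abs (f y' - f y)). lra. }
  enough (sumR_sel h P (fun j => v j * w j) * (y' - y)
          <= sumR h (fun k => v k * clip (w k * y' + theta k))
             - sumR h (fun k => v k * clip (w k * y + theta k)))
    by (unfold residual, Nnet; lra).
  unfold sumR_sel. rewrite <- sumR_mulr, sumR_sub.
  apply sumR_le. intros k Hk.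
  pose proof (Hv k Hk). pose proof (Hw k Hk).
  destruct excluded_middle_informative as [Pk|Pk].
  - rewrite !clip_id by (apply (Hlin k Hk Pk); lra). nra.
  - assert (clip (w k * y + theta k) <= clip (w k * y' + theta k)) by (apply clip_le; nra).
    nra.
Qed.

Definition active (x : R) (k : nat) : Prop := inI a b w theta k x.

Section Active.
Variables (Lf x : R).
Hypotheses
  (HfL : forall y y', a <= y <= b -> a <= y' <= b -> Rabs (f y - f y') <= Lf * Rabs (y - y'))
  (HLf : forall k, (1 <= k <= h)%nat -> Lf < v k * w k).
Hypotheses (Hcrit : forall k, (1 <= k <= h)%nat -> partial (Risk a b h v w f p) theta k = 0)
  (Hconv : forall k, (1 <= k <= h)%nat -> 0 <= hess (Risk a b h v w f p) theta k k).

Lemma active_slope k : (1 <= k <= h)%nat -> active x k ->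
  slope_ge residual (v k * w k - Lf) (win_lo k) (win_hi k).
Proof.
  intros Hk Ak. rewrite <- (sumR_sel_single h k (fun j => v j * w j) Hk).
  apply residual_slope; try apply window_ab; auto.
  intros j _ -> y Hy. apply window_linear; auto.
Qed.

Lemma active_windows_no_crossing i j : (1 <= i <= h)%nat -> (1 <= j <= h)%nat ->
  active x i -> active x j -> win_lo i < win_lo j -> win_hi i < win_hi j -> False.
Proof.
  intros Hi Hj Ai Aj Hlo Hhi.
  pose proof (window_contains i x Ai); pose proof (window_contains j x Aj).
  pose proof (window_ab i); pose proof (window_ab j).
  pose proof (HLf i Hi); pose proof (HLf j Hj).
  apply (zero_mean_windows_nest residual p continuity_residual Hp Hp0
           (win_lo i) (win_hi i) (win_lo j) (win_hi j) (v i * w i - Lf) (v j * w j - Lf));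
    try lra.
  - intros y Hy. apply Hpos. lra.
  - exact (residual_mean_zero i x Hi Ai (Hcrit i Hi)).
  - exact (residual_mean_zero j x Hj Aj (Hcrit j Hj)).
  - exact (active_slope i Hi Ai).
  - exact (active_slope j Hj Aj).
Qed.

Lemma active_windows_nest t k : (1 <= t <= h)%nat -> (1 <= k <= h)%nat ->
  active x t -> active x k -> win_hi t - win_lo t <= win_hi k - win_lo k ->
  win_lo k <= win_lo t /\ win_hi t <= win_hi k.
Proof.
  intros Ht Hk At Ak Hlen.
  split; apply Rnot_lt_le; intro Hlt.
  - apply (active_windows_no_crossing t k); auto; lra.
  - apply (active_windows_no_crossing k t); auto; lra.
Qed.

Section Shortest.
Variable t : nat.
Hypotheses (Ht : (1 <= t <= h)%nat) (At : active x t)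
  (Hshortest : forall k, (1 <= k <= h)%nat -> active x k ->
                win_hi t - win_lo t <= win_hi k - win_lo k).

Lemma active_sum_slope :
  slope_ge residual (sumR_sel h (active x) (fun j => v j * w j) - Lf) (win_lo t) (win_hi t).
Proof.
  apply residual_slope; try apply window_ab; auto.
  intros k Hk Ak y Hy. destruct (active_windows_nest t k); auto.
  apply (window_linear k Hk). lra.
Qed.

(* The window has length at most 1/m < (eps - delta)/2, so it lies in [a, a + eps],
   in [b - eps, b] or in [a + delta, b - delta]. *)
Lemma active_sum_le (m eps delta : R) : 0 < m -> m <= w t -> 0 < delta -> eps - delta > 2 * / m ->
  Rbar_le (Rbar_mult (Finite (/ m)) (Lip a b p)) (inf_on (a + delta) (b - delta) p) ->
  (forall y y', a <= y -> y < y' -> y' <= a + eps -> p y < p y') ->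
  (forall y y', b - eps <= y -> y < y' -> y' <= b -> p y > p y') ->
  sumR_sel h (active x) (fun j => v j * w j) - Lf <= 2 * (v t * w t).
Proof.
  intros Hm Hmw Hdelta Hed HLp Hinc Hdec.
  set (s := sumR_sel h (active x) (fun j => v j * w j) - Lf).
  set (u := win_lo t). set (z := win_hi t).
  pose proof (Hw t Ht). pose proof (Rmult_lt_0_compat _ _ (Hv t Ht) (Hw t Ht)).
  destruct (Rle_dec s 0) as [Hs|Hs]; [lra|]. apply Rnot_le_lt in Hs.
  pose proof (window_contains t x At) as Hx. pose proof (window_ab t) as Hab_t.
  pose proof (window_length t) as Hlen. fold u z in Hx, Hab_t, Hlen.
  assert (Hwm : / w t <= / m) by (apply Rinv_le_contravar; [exact Hm | exact Hmw]).
  assert (Hpw : forall y, u < y < z -> 0 < p y) by (intros; apply Hpos; lra).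
  assert (HPi : 0 < RInt p u z) by (apply RInt_gt0_continuity; auto; lra).
  pose proof (residual_mean_zero t x Ht At (Hcrit t Ht)) as Hmean.
  pose proof (residual_ends_le t x Ht At (Hconv t Ht)) as Hends.
  pose proof active_sum_slope as Hsl. fold s u z in Hmean, Hends, Hsl.
  destruct (Rlt_dec u (a + delta)) as [Hleft|Hnleft];
    [|destruct (Rlt_dec (b - delta) z) as [Hright|Hnright]].
  - apply (slope_le_incr_weight residual p continuity_residual Hp Hp0 u z); auto; try lra.
    + pose proof (Hinc x z ltac:(lra) ltac:(lra) ltac:(lra)). pose proof (Hpw x Hx). lra.
    + intros y Hy. destruct (Req_dec y z) as [->|]; [lra|]. left. apply Hinc; lra.
  - apply (slope_le_decr_weight residual p u z); auto using continuity_residual; try lra.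
    + pose proof (Hdec u x ltac:(lra) ltac:(lra) ltac:(lra)). pose proof (Hpw x Hx). lra.
    + intros y Hy. destruct (Req_dec y u) as [->|]; [lra|]. left. apply Hdec; lra.
  - destruct (Lip_le_inf_on a b p m (a + delta) (b - delta)) as [Lp [HLpE [HLp0 HLpinf]]];
      auto; try lra.
    apply (slope_le_flat_weight residual p continuity_residual Hp Hp0 u z); auto; try lra.
    + apply Hpos. lra.
    + apply Hpos. lra.
    + apply (Lipschitz_doubling a b p Lp m); auto; try lra.
      * apply Lip_bound, HLpE.
      * apply HLpinf. lra.
      * apply HLpinf. lra.
Qed.

End Shortest.
End Active.
End Network.

Theorem corollary2p11
  (a b : R) (h : nat) (v w : nat -> R) (f p : R -> R)
  (theta : nat -> R) (eps delta : R) :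
  a < b ->
  (1 <= h)%nat ->
  (forall i, (1 <= i <= h)%nat -> 0 < v i) ->
  (forall i, (1 <= i <= h)%nat -> 0 < w i) ->
  continuity f -> continuity p ->
  (forall x, 0 <= p x) ->
  (forall x, 0 < p x <-> a < x < b) ->
  Rbar_lt (Lip a b f) (Finite (minR h (fun i => v i * w i))) ->
  grad_zero (S h) (Risk a b h v w f p) theta ->
  0 < eps -> 0 < delta ->
  eps - delta > 2 * / minR h w ->
  Rbar_le (Rbar_mult (Finite (/ minR h w)) (Lip a b p))
          (inf_on (a + delta) (b - delta) p) ->
  (forall x y, a <= x -> x < y -> y <= a + eps -> p x < p y) ->
  (forall x y, b - eps <= x -> x < y -> y <= b -> p x > p y) ->
  ~ descending_critical_point (S h) (Risk a b h v w f p) theta ->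
  forall x, a < x < b ->
    sumR_sel h (fun j => inI a b w theta j x) (fun j => v j * w j)
    <= 4 * maxR_sel h (fun j => inI a b w theta j x) (fun j => v j * w j).
Proof.
  intros Hab Hh Hv Hw Hf Hp Hp0 Hpos HLf Hgrad _ Hdelta Hed HLp Hinc Hdec Hnd x _.
  destruct (Lip_lt_finite a b f _ Hab HLf) as [Lf [HLfE [_ HLf_min]]].
  assert (HLf_lt : forall k, (1 <= k <= h)%nat -> Lf < v k * w k)
    by (intros k Hk; pose proof (minR_le h (fun i => v i * w i) k Hk); lra).
  assert (Hcrit : forall k, (1 <= k <= h)%nat -> partial (Risk a b h v w f p) theta k = 0)
    by (intros k Hk; apply Hgrad; lia).
  assert (Hconv : forall k, (1 <= k <= h)%nat -> 0 <= hess (Risk a b h v w f p) theta k k).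
  { intros k Hk. apply Rnot_lt_le. intro Hneg. apply Hnd. split; [exact Hgrad|].
    exists (fun j => if Nat.eqb j k then 1 else 0). rewrite hess_quad_basis by lia. exact Hneg. }
  pose proof (maxR_sel_ge0 h (fun j => inI a b w theta j x) (fun j => v j * w j)).
  destruct (classic (exists k, (1 <= k <= h)%nat /\ inI a b w theta k x)) as [Hex|Hnone].
  2:{ rewrite sumR_sel_none; [lra|]. intros k Hk Ak. apply Hnone. eauto. }
  destruct (argmin_sel h _ (fun k => win_hi b w theta k - win_lo a w theta k) Hex)
    as [t [Ht [At Hshortest]]].
  pose proof (active_sum_le a b h v w f p theta Hab Hv Hw Hf Hp Hp0 Hpos Lf x
                (Lip_bound a b f Lf HLfE) HLf_lt Hcrit Hconv t Ht At Hshortest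
                (minR h w) eps delta (minR_pos h w Hh Hw) (minR_le h w t Ht)
                Hdelta Hed HLp Hinc Hdec).
  pose proof (maxR_sel_ge h (fun j => inI a b w theta j x) (fun j => v j * w j) t Ht At).
  pose proof (HLf_lt t Ht).
  unfold active in *. lra.
Qed.
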